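(* Let $\phi\in C^1([0,\infty);[0,\infty))$ satisfy $\max_{r\ge0}\phi(r)=\phi(0)>0$ and $\max_{r\ge0}|r\phi(r)|=A_\infty$ for some constant $A_\infty>0$. Then for every $b>\frac{4}{\phi(0)}$ there exists a solution $v$ of $$r v''=v'\Big(1-v\,\phi\big(\tfrac{v}{r}\big)\Big),\quad r>0,\qquad v(0)=v'(0)=0,$$ such that $\lim_{r\to+\infty}v(r)=b$. *)

From Stdlib Require Import Reals.
From Coquelicot Require Import Coquelicot.
Open Scope R_scope.

Definition is_right_derive (f : R -> R) (a l : R) : Prop :=
  filterlim (fun h => (f h - f a) / (h - a)) (at_right a) (locally l).

Definition C1_nonneg (f : R -> R) : Prop :=
  exists f' : R -> R,
    (forall r, 0 < r -> is_derive f r (f' r)) /\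
    is_right_derive f 0 (f' 0) /\
    (forall r, 0 < r -> continuous f' r) /\
    filterlim f' (at_right 0) (locally (f' 0)).

From Stdlib Require Import Reals Lra Lia Classical_Prop.
From Coquelicot Require Import Coquelicot.
Open Scope R_scope.

(* With [psi p = p phi p] the equation reads [(ln v')' = 1/r - psi (v/r)], so the
   solutions with [v(0) = v'(0) = 0] and [v''(0) = a > 0] are the fixed points of
     [v(r) = \int_0^r a s exp (- \int_0^s psi (v(t)/t) dt) ds],
   obtained by Picard iteration in a norm weighted by [t e^(K t)]: [psi] is bounded
   and locally Lipschitz, and the a priori bound [v <= a r^2 / 2] controls [v/t].
   Each solution [v_a] is nondecreasing and depends continuously on [a].
   Shooting on [a]: for small [a] the energy [r v' - 2 v + (c/2) v^2], with
   [c < phi 0] and [c b > 4], is nonincreasing, which keeps [v_a] below [b]; for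
   large [a], [v_a (1/A) > b].  At [a* = sup {a | v_a < b}] continuity gives
   [v_a* <= b].  If [v_a*] stayed below [b - eps], then [psi (v/r) >= kap / r] with
   [kap > 2] for large [r], so [v'] decays like [r^(1 - kap)]; this survives a small
   increase of [a], contradicting maximality.  Hence [v_a*] increases to [b]. *)

Lemma continuity_pt_of_eps (f : R -> R) (x0 : R) :
  (forall eps, 0 < eps -> exists alp, 0 < alp /\
     forall x, Rabs (x - x0) < alp -> Rabs (f x - f x0) < eps) ->
  continuity_pt f x0.
Proof.
  intros H eps Heps. destruct (H eps Heps) as [alp [Ha Hx]].
  exists alp; split; [lra|]. intros x [_ Hd]. apply Hx, Hd.
Qed.

Lemma continuity_pt_eps (f : R -> R) (x0 : R) :
  continuity_pt f x0 ->
  forall eps, 0 < eps -> exists alp, 0 < alp /\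
     forall x, Rabs (x - x0) < alp -> Rabs (f x - f x0) < eps.
Proof.
  intros H eps Heps. destruct (H eps Heps) as [alp [Ha Hx]].
  exists alp; split; [lra|]. intros x Hd.
  destruct (Req_dec x x0) as [->|Hne].
  - rewrite Rminus_diag, Rabs_R0; lra.
  - apply (Hx x). split; [split; [exact I| auto]| exact Hd].
Qed.

Lemma continuity_exp_comp (f : R -> R) :
  continuity f -> continuity (fun x => exp (f x)).
Proof.
  intros Hf. apply (continuity_comp f exp); [exact Hf|].
  apply derivable_continuous, derivable_exp.
Qed.

Ltac solve_continuity := repeat first
  [ assumption | apply continuity_plus | apply continuity_minus
  | apply continuity_mult | apply continuity_opp | apply continuity_exp_comp
  | (intros ?; apply continuity_pt_id)
  | (apply continuity_const; intros ? ?; reflexivity) ].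

Lemma continuity_pt_of_is_derive (f : R -> R) x l :
  is_derive f x l -> continuity_pt f x.
Proof.
  intros H. apply continuity_pt_filterlim.
  apply (@ex_derive_continuous R_AbsRing R_NormedModule f x). exists l; exact H.
Qed.

Lemma continuity_of_is_derive (f df : R -> R) :
  (forall x, is_derive f x (df x)) -> continuity f.
Proof. intros H x. exact (continuity_pt_of_is_derive f x (df x) (H x)). Qed.

Lemma nondecreasing_of_derive_nonneg (f df : R -> R) a b : a <= b ->
  (forall x, a <= x <= b -> continuity_pt f x) ->
  (forall x, a < x < b -> is_derive f x (df x)) ->
  (forall x, a < x < b -> 0 <= df x) -> f a <= f b.
Proof.
  intros Hab Hc Hd Hs.
  destruct (Req_dec a b) as [->|Hne]; [lra|].
  assert (pr1 : forall c, a < c < b -> derivable_pt f c).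
  { intros c Hcc. exists (df c). apply is_derive_Reals, Hd, Hcc. }
  assert (pr2 : forall c, a < c < b -> derivable_pt id c)
    by (intros c _; apply derivable_pt_id).
  destruct (MVT f id a b pr1 pr2) as [c [P Hm]];
    [lra| exact Hc | intros c _; apply derivable_continuous_pt, derivable_pt_id |].
  rewrite (derive_pt_eq_0 id c 1 (pr2 c P) (derivable_pt_lim_id c)) in Hm.
  rewrite (derive_pt_eq_0 f c (df c) (pr1 c P) (proj1 (is_derive_Reals _ _ _) (Hd c P))) in Hm.
  unfold id in Hm. specialize (Hs c P). nra.
Qed.

Lemma exp_ge_1 x : 0 <= x -> 1 <= exp x.
Proof.
  intros Hx. rewrite <- exp_0. destruct (Req_dec x 0) as [->|E]; [lra|].
  left. apply exp_increasing. lra.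
Qed.

Lemma exp_le_exp x y : x <= y -> exp x <= exp y.
Proof.
  intros H. destruct (Req_dec x y) as [->|E]; [lra|]. left. apply exp_increasing. lra.
Qed.

Lemma exp_neg_le_1 x : 0 <= x -> exp (- x) <= 1.
Proof. intros Hx. rewrite <- exp_0. apply exp_le_exp. lra. Qed.

Lemma exp_neg_lipschitz x y : 0 <= x -> 0 <= y ->
  Rabs (exp (- x) - exp (- y)) <= Rabs (x - y).
Proof.
  assert (Key : forall p q, 0 <= p <= q ->
            0 <= exp (- p) - exp (- q) <= q - p).
  { intros p q [Hp Hpq].
    replace (exp (- q)) with (exp (- p) * exp (- (q - p)))
      by (rewrite <- exp_plus; f_equal; ring).
    pose proof (exp_ineq1_le (- (q - p))). pose proof (exp_neg_le_1 p Hp).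
    pose proof (exp_pos (- p)). pose proof (exp_neg_le_1 (q - p) ltac:(lra)).
    assert (0 <= (1 - exp (- p)) * (1 - exp (- (q - p)))) by (apply Rmult_le_pos; lra).
    assert (0 <= exp (- p) * (1 - exp (- (q - p)))) by (apply Rmult_le_pos; lra).
    set (e := exp (- p)) in *. set (E := exp (- (q - p))) in *.
    split; nra. }
  intros Hx Hy. destruct (Rle_dec x y) as [Hxy|Hxy].
  - destruct (Key x y (conj Hx Hxy)).
    rewrite (Rabs_right (exp (- x) - _)), (Rabs_left1 (x - y)) by lra. lra.
  - apply Rnot_le_lt in Hxy. destruct (Key y x (conj Hy (Rlt_le _ _ Hxy))).
    rewrite (Rabs_left1 (exp (- x) - _)), (Rabs_right (x - y)) by lra. lra.
Qed.

Lemma exp_ln_ratio x y : 0 < x -> 0 < y -> exp (ln x - ln y) = x / y.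
Proof.
  intros Hx Hy. unfold Rminus. rewrite exp_plus, exp_Ropp, !exp_ln by lra. reflexivity.
Qed.

Lemma pow_half_pos n : 0 < (/ 2) ^ n.
Proof. apply pow_lt; lra. Qed.

Lemma pow_half_small eps : 0 < eps ->
  exists N, forall n, (n >= N)%nat -> (/ 2) ^ n < eps.
Proof.
  intros He. destruct (pow_lt_1_zero (/ 2)) with (y := eps) as [N HN].
  - rewrite Rabs_right; lra.
  - lra.
  - exists N. intros n Hn. specialize (HN n Hn).
    rewrite Rabs_right in HN; [exact HN|]. apply Rle_ge, pow_le; lra.
Qed.

Lemma scaled_pow_half_small c eps : 0 < eps ->
  exists N, forall n, (n >= N)%nat -> c * (/ 2) ^ n < eps.
Proof.
  intros He. pose proof (Rabs_pos c).
  destruct (pow_half_small (eps / (Rabs c + 1))) as [N HN].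
  { apply Rdiv_lt_0_compat; lra. }
  exists N. intros n Hn. specialize (HN n Hn). pose proof (pow_half_pos n).
  apply Rle_lt_trans with (Rabs c * (/ 2) ^ n).
  - apply Rmult_le_compat_r; [lra| apply Rle_abs].
  - apply (Rmult_lt_compat_l (Rabs c + 1)) in HN; [|lra].
    replace ((Rabs c + 1) * (eps / (Rabs c + 1))) with eps in HN by (field; lra).
    nra.
Qed.

Lemma le_of_le_plus_pow_half x y c : (forall n, x <= y + c * (/ 2) ^ n) -> x <= y.
Proof.
  intros H. apply Rnot_lt_le. intros Hlt.
  destruct (scaled_pow_half_small c (x - y)) as [N HN]; [lra|].
  specialize (HN N (le_n N)). specialize (H N). lra.
Qed.

Lemma Un_cv_of_pow_half_bound (u : nat -> R) l c :
  (forall n, Rabs (u n - l) <= c * (/ 2) ^ n) -> Un_cv u l.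
Proof.
  intros H eps He. destruct (scaled_pow_half_small c eps He) as [N HN].
  exists N. intros n Hn. unfold Rdist. eapply Rle_lt_trans; [apply H| apply HN, Hn].
Qed.

Lemma pow_half_increments_tail (u : nat -> R) c :
  (forall n, Rabs (u (S n) - u n) <= c * (/ 2) ^ n) ->
  forall n k, Rabs (u (n + k)%nat - u n) <= 2 * c * (/ 2) ^ n.
Proof.
  intros H n k.
  assert (Hc : 0 <= c).
  { specialize (H O). simpl in H. pose proof (Rabs_pos (u 1%nat - u O)). lra. }
  enough (Ht : Rabs (u (n + k)%nat - u n) <= 2 * c * (/ 2) ^ n * (1 - (/ 2) ^ k)).
  { pose proof (pow_half_pos n). pose proof (pow_half_pos k).
    assert (0 <= c * (/ 2) ^ n) by nra. nra. }
  induction k.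
  - rewrite Nat.add_0_r, Rminus_diag, Rabs_R0. simpl; lra.
  - replace (n + S k)%nat with (S (n + k)) by lia.
    replace (u (S (n + k)) - u n)
      with ((u (S (n + k)) - u (n + k)%nat) + (u (n + k)%nat - u n)) by ring.
    eapply Rle_trans; [apply Rabs_triang|].
    specialize (H (n + k)%nat). rewrite pow_add in H. simpl. nra.
Qed.

Lemma Un_cv_of_pow_half_increments (u : nat -> R) c :
  (forall n, Rabs (u (S n) - u n) <= c * (/ 2) ^ n) ->
  exists l, Un_cv u l /\ forall n, Rabs (u n - l) <= 2 * c * (/ 2) ^ n.
Proof.
  intros H. pose proof (pow_half_increments_tail u c H) as Ht.
  assert (Hcv : Cauchy_crit u).
  { intros eps He. destruct (scaled_pow_half_small (4 * c) eps He) as [N HN].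
    exists N. intros n m Hn Hm. unfold Rdist. specialize (HN N (le_n N)).
    destruct (Nat.le_exists_sub N n Hn) as [p [-> _]].
    destruct (Nat.le_exists_sub N m Hm) as [q [-> _]].
    rewrite (Nat.add_comm p N), (Nat.add_comm q N).
    replace (u (N + p)%nat - u (N + q)%nat)
      with ((u (N + p)%nat - u N) - (u (N + q)%nat - u N)) by ring.
    pose proof (Ht N p). pose proof (Ht N q).
    eapply Rle_lt_trans; [apply Rabs_triang|]. rewrite Rabs_Ropp. lra. }
  destruct (Rcomplete.R_complete u Hcv) as [l Hl].
  exists l; split; [exact Hl|]. intros n. apply Rnot_lt_le. intros Hlt.
  destruct (Hl (Rabs (u n - l) - 2 * c * (/ 2) ^ n)) as [N HN]; [lra|].
  specialize (HN (n + N)%nat ltac:(lia)). unfold Rdist in HN.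
  specialize (Ht n N).
  pose proof (Rabs_triang (- (u (n + N)%nat - u n)) (u (n + N)%nat - l)) as Htri.
  replace (- (u (n + N)%nat - u n) + (u (n + N)%nat - l)) with (u n - l) in Htri by ring.
  rewrite Rabs_Ropp in Htri. lra.
Qed.

Lemma ex_RInt_continuity f a b : continuity f -> ex_RInt f a b.
Proof.
  intros H. apply (ex_RInt_continuous (V := R_CompleteNormedModule)).
  intros z _. apply continuity_pt_filterlim, H.
Qed.

Lemma RInt_antiderivative (F f : R -> R) a b : a <= b ->
  (forall x, a <= x <= b -> is_derive F x (f x)) -> continuity f ->
  @eq R (RInt f a b) (F b - F a).
Proof.
  intros Hab HF Hf. apply is_RInt_unique, (is_RInt_derive F f).
  - intros x Hx. apply HF. rewrite Rmin_left, Rmax_right in Hx; lra.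
  - intros x _. apply continuity_pt_filterlim, Hf.
Qed.

Lemma RInt_le_continuity f g a b : a <= b -> continuity f -> continuity g ->
  (forall x, a <= x <= b -> f x <= g x) -> RInt f a b <= RInt g a b.
Proof.
  intros Hab Hf Hg H. apply RInt_le; auto using ex_RInt_continuity.
  intros x Hx; apply H; lra.
Qed.

Lemma RInt_const_R c a b : @eq R (RInt (fun _ => c) a b) (c * (b - a)).
Proof.
  rewrite (RInt_const (V := R_CompleteNormedModule)).
  unfold scal; simpl; unfold mult; simpl. ring.
Qed.

Lemma RInt_nonneg f a b : a <= b -> continuity f ->
  (forall x, a <= x <= b -> 0 <= f x) -> 0 <= RInt f a b.
Proof.
  intros Hab Hf H. pose proof (RInt_const_R 0 a b) as E. rewrite Rmult_0_l in E.
  rewrite <- E. apply RInt_le_continuity; auto. solve_continuity.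
Qed.

Lemma RInt_diff_le f g h a b : a <= b ->
  continuity f -> continuity g -> continuity h ->
  (forall x, a <= x <= b -> Rabs (f x - g x) <= h x) ->
  Rabs (RInt f a b - RInt g a b) <= RInt h a b.
Proof.
  intros Hab Hf Hg Hh H.
  replace (RInt f a b - RInt g a b) with (RInt (fun x => f x - g x) a b)
    by (apply (RInt_minus f g a b); apply ex_RInt_continuity; auto).
  assert (Hfg : continuity (fun x => f x - g x)) by solve_continuity.
  eapply Rle_trans.
  - apply abs_RInt_le; auto using ex_RInt_continuity.
  - apply RInt_le_continuity; auto.
    intros x. apply (continuity_pt_comp (fun x => f x - g x) Rabs); auto.
    apply Rcontinuity_abs.
Qed.

Lemma is_derive_RInt_continuity f a x : continuity f ->
  is_derive (fun r => RInt f a r) x (f x).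
Proof.
  intros Hf. apply (is_derive_RInt (V := R_CompleteNormedModule) f _ a x).
  - apply filter_forall. intros y. apply RInt_correct, ex_RInt_continuity, Hf.
  - apply continuity_pt_filterlim, Hf.
Qed.

Lemma increment_le_of_derive_le (F G f g : R -> R) x y : x <= y ->
  (forall t, x <= t <= y -> is_derive F t (f t)) ->
  (forall t, x <= t <= y -> is_derive G t (g t)) ->
  (forall t, x < t < y -> f t <= g t) -> F y - F x <= G y - G x.
Proof.
  intros Hxy HF HG Hfg.
  assert (HD : forall t, x <= t <= y -> is_derive (fun t => G t - F t) t (g t - f t))
    by (intros t Ht; apply (is_derive_minus G F); auto).
  enough (G x - F x <= G y - F y) by lra.
  apply (nondecreasing_of_derive_nonneg (fun t => G t - F t) (fun t => g t - f t) x y Hxy).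
  - intros t Ht. apply (continuity_pt_of_is_derive _ _ _ (HD t Ht)).
  - intros t Ht. apply HD. lra.
  - intros t Ht. specialize (Hfg t Ht). lra.
Qed.

Lemma unbounded_of_derive_ge_inv (F f : R -> R) r0 th M : 0 < r0 -> 0 < th ->
  (forall t, r0 <= t -> is_derive F t (f t)) ->
  (forall t, r0 <= t -> th / t <= f t) -> exists t, r0 <= t /\ M < F t.
Proof.
  intros Hr0 Hth HD Hf.
  set (t := r0 * exp (Rabs (M - F r0) / th + 1)).
  assert (Hdiv : 0 <= Rabs (M - F r0) / th)
    by (apply Rdiv_le_0_compat; [apply Rabs_pos| lra]).
  pose proof (exp_ge_1 (Rabs (M - F r0) / th + 1) ltac:(lra)).
  assert (Ht : r0 <= t) by (unfold t; nra).
  exists t. split; [exact Ht|].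
  assert (HG : th * ln t - th * ln r0 <= F t - F r0).
  { apply (increment_le_of_derive_le (fun t => th * ln t) F (fun t => th / t) f);
      [exact Ht | | |].
    - intros x Hx. auto_derive; [lra| field; lra].
    - intros x Hx. apply HD; lra.
    - intros x Hx. apply Hf; lra. }
  assert (Hln : ln t = ln r0 + (Rabs (M - F r0) / th + 1))
    by (unfold t; rewrite ln_mult, ln_exp; auto; apply exp_pos).
  rewrite Hln in HG.
  assert (th * (Rabs (M - F r0) / th) = Rabs (M - F r0)) by (field; lra).
  pose proof (Rle_abs (M - F r0)). nra.
Qed.

Lemma is_right_derive_0_of_quadratic_bound (f : R -> R) c : 0 <= c -> f 0 = 0 ->
  (forall y, 0 < y -> Rabs (f y) <= c * (y * y)) -> is_right_derive f 0 0.
Proof.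
  intros Hc Hf0 Hf. unfold is_right_derive. apply filterlim_locally. intros [eps He].
  assert (Hd : 0 < eps / (c + 1)) by (apply Rdiv_lt_0_compat; lra).
  exists (mkposreal _ Hd). intros y Hy Hy0. change (Rabs (y - 0) < eps / (c + 1)) in Hy.
  change (Rabs ((f y - f 0) / (y - 0) - 0) < eps).
  rewrite Hf0, !Rminus_0_r in *. rewrite Rabs_right in Hy by lra.
  rewrite Rabs_div, (Rabs_right y) by lra. specialize (Hf y Hy0).
  apply Rle_lt_trans with (c * y).
  - apply (Rmult_le_reg_r y); [lra|].
    replace (Rabs (f y) / y * y) with (Rabs (f y)) by (field; lra). nra.
  - assert ((c + 1) * y < eps).
    { replace eps with ((c + 1) * (eps / (c + 1))) by (field; lra).
      apply Rmult_lt_compat_l; lra. }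
    lra.
Qed.

Lemma is_lim_of_nondecreasing_sup (f : R -> R) l :
  (forall x y, 0 <= x <= y -> f x <= f y) -> (forall r, 0 <= r -> f r <= l) ->
  (forall eps, 0 < eps -> exists r, 0 <= r /\ l - eps < f r) -> is_lim f p_infty l.
Proof.
  intros Hmono Hle Hsup. apply is_lim_spec. intros eps.
  destruct (Hsup eps (cond_pos eps)) as [r [Hr Hlr]].
  exists r. intros x Hx. pose proof (Hmono r x ltac:(lra)). specialize (Hle x ltac:(lra)).
  apply Rabs_def1; lra.
Qed.

(** * The integral equation *)

Definition lipschitz_upto (f : R -> R) (P L : R) :=
  forall x y, 0 <= x <= P -> 0 <= y <= P -> Rabs (f x - f y) <= L * Rabs (x - y).

Section IntegralEquation.

Variables (psi : R -> R) (A : R).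
Hypothesis psi_continuity : continuity psi.
Hypothesis psi_bounds : forall p, 0 <= psi p <= A.
Hypothesis psi_lipschitz :
  forall P, 0 <= P -> exists L, 0 < L /\ lipschitz_upto psi P L.

(* Even in [t], hence continuous on all of [R]; at [t = 0] it is [psi 0]
   because [x / 0 = 0]. *)
Definition psi_quot (u : R -> R) (t : R) := psi (u (Rabs t) / Rabs t).
Definition psi_int (u : R -> R) (s : R) := RInt (psi_quot u) 0 s.
Definition picard_map (a : R) (u : R -> R) (r : R) :=
  RInt (fun s => a * s * exp (- psi_int u s)) 0 r.

Definition admissible (a : R) (u : R -> R) :=
  (forall r, 0 < r -> continuity_pt u r) /\
  (forall r, 0 <= r -> 0 <= u r <= a * r * r / 2).

Lemma admissible_quot_bounds a u t : admissible a u -> 0 < t ->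
  0 <= u t / t <= a * t / 2.
Proof.
  intros [_ Hb] Ht. destruct (Hb t (Rlt_le _ _ Ht)) as [H1 H2]. split.
  - apply Rdiv_le_0_compat; lra.
  - apply (Rmult_le_reg_r t); [lra|]. unfold Rdiv.
    rewrite Rmult_assoc, Rinv_l by lra. nra.
Qed.

Lemma psi_quot_0 u : psi_quot u 0 = psi 0.
Proof. unfold psi_quot. rewrite Rabs_R0. unfold Rdiv. rewrite Rinv_0, Rmult_0_r. reflexivity. Qed.

Lemma psi_quot_continuity a u : 0 <= a -> admissible a u -> continuity (psi_quot u).
Proof.
  intros Ha Hu t. destruct (Req_dec t 0) as [->|Ht].
  - apply continuity_pt_of_eps. intros eps He.
    destruct (continuity_pt_eps psi 0 (psi_continuity 0) eps He) as [d [Hd Hpd]].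
    exists (2 * d / (a + 1)). split; [apply Rdiv_lt_0_compat; lra|].
    intros x Hx. rewrite psi_quot_0.
    destruct (Req_dec x 0) as [->|Hx0].
    + rewrite psi_quot_0, Rminus_diag, Rabs_R0; lra.
    + unfold psi_quot. apply Hpd.
      assert (Hax : 0 < Rabs x) by (apply Rabs_pos_lt; auto).
      destruct (admissible_quot_bounds a u (Rabs x) Hu Hax) as [H1 H2].
      rewrite Rminus_0_r in Hx |- *. rewrite Rabs_right by lra.
      apply Rle_lt_trans with (a * Rabs x / 2); [lra|].
      apply (Rmult_lt_compat_l (a + 1)) in Hx; [|lra].
      unfold Rdiv in Hx. field_simplify in Hx; [|lra]. nra.
  - assert (Hax : 0 < Rabs t) by (apply Rabs_pos_lt; auto).
    apply (continuity_pt_comp (fun t => u (Rabs t) / Rabs t) psi); [|apply psi_continuity].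
    apply (continuity_pt_div (fun t => u (Rabs t)) Rabs);
      [| apply Rcontinuity_abs | lra].
    apply (continuity_pt_comp Rabs u); [apply Rcontinuity_abs| apply (proj1 Hu), Hax].
Qed.

Section AdmissibleFunction.

Variables (a0 : R) (u : R -> R).
Hypotheses (a0_ge0 : 0 <= a0) (u_admissible : admissible a0 u).

Lemma psi_int_derive s : is_derive (psi_int u) s (psi_quot u s).
Proof.
  apply is_derive_RInt_continuity. exact (psi_quot_continuity a0 u a0_ge0 u_admissible).
Qed.

Lemma psi_int_continuity : continuity (psi_int u).
Proof. exact (continuity_of_is_derive _ _ psi_int_derive). Qed.

Lemma psi_int_bounds s : 0 <= s -> 0 <= psi_int u s <= A * s.
Proof.
  intros Hs. pose proof (psi_quot_continuity a0 u a0_ge0 u_admissible) as Hc. split.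
  - apply RInt_nonneg; auto. intros x _. apply psi_bounds.
  - unfold psi_int. apply Rle_trans with (RInt (fun _ => A) 0 s).
    + apply RInt_le_continuity; auto; [solve_continuity|]. intros x _. apply psi_bounds.
    + rewrite RInt_const_R. lra.
Qed.

Lemma picard_integrand_continuity a :
  continuity (fun s => a * s * exp (- psi_int u s)).
Proof. pose proof psi_int_continuity. solve_continuity. Qed.

Lemma picard_map_derive a r :
  is_derive (picard_map a u) r (a * r * exp (- psi_int u r)).
Proof.
  apply (is_derive_RInt_continuity (fun s => a * s * exp (- psi_int u s))).
  apply picard_integrand_continuity.
Qed.

End AdmissibleFunction.

Lemma picard_map_admissible a u : 0 <= a -> admissible a u -> admissible a (picard_map a u).
Proof.
  intros Ha Hu. split.
  - intros r _. eapply continuity_pt_of_is_derive, (picard_map_derive a u Ha Hu).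
  - intros r Hr. pose proof (picard_integrand_continuity a u Ha Hu a) as Hc. split.
    + apply RInt_nonneg; auto. intros x Hx.
      pose proof (exp_pos (- psi_int u x)). apply Rmult_le_pos; [nra| lra].
    + unfold picard_map. apply Rle_trans with (RInt (fun s => a * s) 0 r).
      * apply RInt_le_continuity; auto; [solve_continuity|]. intros x Hx.
        destruct (psi_int_bounds a u Ha Hu x) as [H1 _]; [lra|].
        pose proof (exp_neg_le_1 _ H1). pose proof (exp_pos (- psi_int u x)).
        assert (0 <= a * x) by nra. nra.
      * right. rewrite (RInt_antiderivative (fun s => a * s * s / 2)); [field | lra | |].
        -- intros x _. auto_derive; auto. field.
        -- solve_continuity.
Qed.

(* If [|u - w| <= m t e^(K t)] on [[0, rho]], the Picard map halves [m] (this is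
   what [K_large] buys), up to a term proportional to [|a - a'|]. *)

Section Contraction.

Variables (beta rho L K m a a' : R) (u w : R -> R).
Hypotheses (L_lipschitz : lipschitz_upto psi (beta * rho / 2) L) (L_pos : 0 < L)
  (m_ge0 : 0 <= m) (K_pos : 0 < K) (K_large : 2 * beta * L <= K * K)
  (a_range : 0 <= a <= beta) (a'_range : 0 <= a' <= beta)
  (u_admissible : admissible a u) (w_admissible : admissible a' w)
  (uw_close : forall t, 0 <= t <= rho -> Rabs (u t - w t) <= m * t * exp (K * t)).

Lemma psi_quot_diff t : 0 <= t <= rho ->
  Rabs (psi_quot u t - psi_quot w t) <= L * m * exp (K * t).
Proof.
  intros Ht. pose proof (exp_pos (K * t)).
  destruct (Req_dec t 0) as [->|Ht0].
  - rewrite !psi_quot_0, Rminus_diag, Rabs_R0.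
    apply Rmult_le_pos; [apply Rmult_le_pos|]; lra.
  - assert (Htp : 0 < t) by lra. unfold psi_quot. rewrite (Rabs_right t) by lra.
    destruct (admissible_quot_bounds a u t u_admissible Htp).
    destruct (admissible_quot_bounds a' w t w_admissible Htp).
    eapply Rle_trans; [apply L_lipschitz|].
    + split; [lra|]. apply Rle_trans with (a * t / 2); [lra|]. nra.
    + split; [lra|]. apply Rle_trans with (a' * t / 2); [lra|]. nra.
    + replace (u t / t - w t / t) with ((u t - w t) / t) by (field; lra).
      rewrite Rabs_div, (Rabs_right t) by lra.
      rewrite Rmult_assoc. apply Rmult_le_compat_l; [lra|].
      apply (Rmult_le_reg_r t); [lra|]. unfold Rdiv.
      rewrite Rmult_assoc, Rinv_l by lra. specialize (uw_close t Ht). nra.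
Qed.

Lemma RInt_exp_weight c s : 0 <= s ->
  @eq R (RInt (fun t => c * exp (K * t)) 0 s) (c * (exp (K * s) - 1) / K).
Proof.
  intros Hs. rewrite (RInt_antiderivative (fun t => c * exp (K * t) / K)).
  - rewrite Rmult_0_r, exp_0. field. lra.
  - lra.
  - intros x _. auto_derive; auto. field. lra.
  - solve_continuity.
Qed.

Lemma psi_int_diff s : 0 <= s <= rho ->
  Rabs (psi_int u s - psi_int w s) <= L * m * exp (K * s) / K.
Proof.
  intros Hs. unfold psi_int. eapply Rle_trans.
  - apply (RInt_diff_le _ _ (fun t => (L * m) * exp (K * t))).
    + lra.
    + apply (psi_quot_continuity a u); [lra | exact u_admissible].
    + apply (psi_quot_continuity a' w); [lra | exact w_admissible].
    + solve_continuity.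
    + intros x Hx. apply psi_quot_diff. lra.
  - rewrite RInt_exp_weight by lra. unfold Rdiv. apply Rmult_le_compat_r.
    + left; apply Rinv_0_lt_compat; lra.
    + assert (0 <= L * m) by (apply Rmult_le_pos; lra). nra.
Qed.

Lemma picard_integrand_diff r s : 0 <= s <= r -> r <= rho ->
  Rabs (a * s * exp (- psi_int u s) - a' * s * exp (- psi_int w s))
  <= Rabs (a - a') * r + beta * r * (L * m / K) * exp (K * s).
Proof.
  intros Hs HrR.
  destruct (psi_int_bounds a u ltac:(lra) u_admissible s ltac:(lra)) as [Iu _].
  destruct (psi_int_bounds a' w ltac:(lra) w_admissible s ltac:(lra)) as [Iw _].
  pose proof (exp_neg_lipschitz _ _ Iu Iw) as Hexp.
  pose proof (psi_int_diff s ltac:(lra)) as HI.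
  pose proof (exp_neg_le_1 _ Iu). pose proof (exp_pos (- psi_int u s)).
  pose proof (exp_pos (K * s)). pose proof (Rabs_pos (a - a')).
  set (Eu := exp (- psi_int u s)) in *. set (Ew := exp (- psi_int w s)) in *.
  replace (a * s * Eu - a' * s * Ew) with ((a - a') * s * Eu + a' * s * (Eu - Ew)) by ring.
  eapply Rle_trans; [apply Rabs_triang|].
  rewrite !Rabs_mult, (Rabs_right s), (Rabs_right Eu), (Rabs_right a') by lra.
  apply Rplus_le_compat.
  - assert (0 <= Rabs (a - a') * s) by (apply Rmult_le_pos; lra).
    assert (Rabs (a - a') * s <= Rabs (a - a') * r) by (apply Rmult_le_compat_l; lra).
    nra.
  - assert (0 <= L * m * exp (K * s) / K)
      by (apply Rdiv_le_0_compat; [apply Rmult_le_pos; [apply Rmult_le_pos|]|]; lra).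
    replace (beta * r * (L * m / K) * exp (K * s))
      with ((beta * r) * (L * m * exp (K * s) / K)) by (field; lra).
    pose proof (Rabs_pos (Eu - Ew)).
    apply Rmult_le_compat; [apply Rmult_le_pos; lra | lra | apply Rmult_le_compat; lra | lra].
Qed.

Lemma picard_map_diff r : 0 <= r <= rho ->
  Rabs (picard_map a u r - picard_map a' w r)
  <= (Rabs (a - a') * rho + m / 2) * r * exp (K * r).
Proof.
  intros Hr.
  set (c1 := Rabs (a - a') * r). set (c2 := beta * r * (L * m / K)).
  unfold picard_map. eapply Rle_trans.
  - apply (RInt_diff_le _ _ (fun s => c1 + c2 * exp (K * s))); [lra | | | |].
    + apply (picard_integrand_continuity a u); [lra | exact u_admissible].
    + apply (picard_integrand_continuity a' w); [lra | exact w_admissible].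
    + solve_continuity.
    + intros s Hs. apply picard_integrand_diff; lra.
  - rewrite (RInt_antiderivative (fun s => c1 * s + c2 * exp (K * s) / K)).
    2: lra.
    2:{ intros x _. auto_derive; auto. field. lra. }
    2: solve_continuity.
    rewrite !Rmult_0_r, exp_0.
    pose proof (exp_ge_1 (K * r) ltac:(nra)). pose proof (Rabs_pos (a - a')).
    assert (Hc1 : c1 * r <= Rabs (a - a') * rho * r * exp (K * r)).
    { unfold c1. assert (0 <= Rabs (a - a') * r) by nra.
      assert (Rabs (a - a') * r * r <= Rabs (a - a') * rho * r) by nra.
      assert (0 <= Rabs (a - a') * rho * r) by nra. nra. }
    assert (Hc2 : c2 * (exp (K * r) - 1) / K <= m / 2 * r * exp (K * r)).
    { unfold c2.
      replace (beta * r * (L * m / K) * (exp (K * r) - 1) / K)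
        with ((beta * L / (K * K)) * (m * r * (exp (K * r) - 1))) by (field; lra).
      assert (Hq : beta * L / (K * K) <= / 2).
      { apply (Rmult_le_reg_r (K * K)); [nra|]. unfold Rdiv.
        rewrite Rmult_assoc, Rinv_l by nra. lra. }
      assert (0 <= beta * L / (K * K))
        by (apply Rdiv_le_0_compat; nra).
      assert (0 <= m * r * (exp (K * r) - 1)) by (apply Rmult_le_pos; nra).
      apply Rle_trans with (/ 2 * (m * r * exp (K * r))); [|lra].
      apply Rmult_le_compat; nra. }
    replace (c2 * (exp (K * r) - 1) / K) with (c2 * exp (K * r) / K - c2 * 1 / K)
      in Hc2 by (field; lra).
    lra.
Qed.

End Contraction.

Definition weight_rate beta L := 2 * beta * L + 1.

Lemma weight_rate_spec beta L : 0 <= beta -> 0 <= L ->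
  0 < weight_rate beta L /\ 2 * beta * L <= weight_rate beta L * weight_rate beta L.
Proof. intros Hb HL. unfold weight_rate. assert (0 <= beta * L) by nra. split; nra. Qed.

Lemma psi_lipschitz_on beta rho : 0 < beta -> 0 < rho ->
  exists L, 0 < L /\ lipschitz_upto psi (beta * rho / 2) L.
Proof. intros Hb Hr. apply psi_lipschitz. apply Rlt_le, Rdiv_lt_0_compat; [nra| lra]. Qed.

Fixpoint picard (a : R) (n : nat) : R -> R :=
  match n with O => fun _ => 0 | S n => picard_map a (picard a n) end.

Definition sol (a r : R) : R := real (Lim_seq (fun n => picard a n r)).

Lemma admissible_0 a : 0 <= a -> admissible a (fun _ => 0).
Proof.
  intros Ha. split.
  - intros r _. apply continuity_pt_const. intros ? ?; reflexivity.
  - intros r Hr. split; [lra|]. assert (0 <= a * r) by nra. nra.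
Qed.

Lemma picard_admissible a n : 0 <= a -> admissible a (picard a n).
Proof.
  intros Ha. induction n; simpl.
  - apply admissible_0, Ha.
  - apply picard_map_admissible; assumption.
Qed.

Section Iterates.

Variables (beta rho L : R).
Hypotheses (rho_pos : 0 < rho) (L_pos : 0 < L)
  (L_lipschitz : lipschitz_upto psi (beta * rho / 2) L).

Lemma picard_step a n t : 0 < a <= beta -> 0 <= t <= rho ->
  Rabs (picard a (S n) t - picard a n t)
  <= (beta * rho / 2) * (/ 2) ^ n * t * exp (weight_rate beta L * t).
Proof.
  intros Ha. destruct (weight_rate_spec beta L) as [HK HKL]; try lra.
  revert t. induction n; intros t Ht.
  - simpl. rewrite Rminus_0_r.
    destruct (picard_map_admissible a (fun _ => 0) ltac:(lra) (admissible_0 a ltac:(lra)))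
      as [_ Hb].
    destruct (Hb t ltac:(lra)). rewrite Rabs_right by lra.
    pose proof (exp_ge_1 (weight_rate beta L * t) ltac:(nra)).
    assert (a * t <= beta * rho) by nra. assert (0 <= beta * rho / 2 * t) by nra.
    apply Rle_trans with (beta * rho / 2 * t); [nra|]. rewrite Rmult_1_r. nra.
  - change (picard a (S (S n)) t) with (picard_map a (picard a (S n)) t).
    change (picard a (S n) t) with (picard_map a (picard a n) t).
    pose proof (pow_half_pos n).
    eapply Rle_trans.
    + apply (picard_map_diff beta rho L (weight_rate beta L)
               ((beta * rho / 2) * (/ 2) ^ n)); try assumption; try lra;
        try (apply picard_admissible; lra); try (intros s Hs; apply IHn, Hs).
      apply Rmult_le_pos; [apply Rlt_le, Rdiv_lt_0_compat; nra| lra].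
    + rewrite Rminus_diag, Rabs_R0. simpl. right. field.
Qed.

Lemma picard_param a a' n t : 0 < a <= beta -> 0 < a' <= beta -> 0 <= t <= rho ->
  Rabs (picard a n t - picard a' n t)
  <= (2 * Rabs (a - a') * rho) * t * exp (weight_rate beta L * t).
Proof.
  intros Ha Ha'. destruct (weight_rate_spec beta L) as [HK HKL]; try lra.
  pose proof (Rabs_pos (a - a')).
  revert t. induction n; intros t Ht.
  - simpl. rewrite Rminus_diag, Rabs_R0.
    pose proof (exp_pos (weight_rate beta L * t)).
    apply Rmult_le_pos; [|lra]. apply Rmult_le_pos; [|lra].
    apply Rmult_le_pos; [|lra]. apply Rmult_le_pos; lra.
  - simpl. eapply Rle_trans.
    + apply (picard_map_diff beta rho L (weight_rate beta L) (2 * Rabs (a - a') * rho));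
        try assumption; try lra; try nra; apply picard_admissible; lra.
    + right. field.
Qed.

Lemma sol_limit a t : 0 < a <= beta -> 0 <= t <= rho ->
  Un_cv (fun n => picard a n t) (sol a t) /\
  forall n, Rabs (picard a n t - sol a t)
            <= 2 * ((beta * rho / 2) * t * exp (weight_rate beta L * t)) * (/ 2) ^ n.
Proof.
  intros Ha Ht.
  destruct (Un_cv_of_pow_half_increments (fun n => picard a n t)
              ((beta * rho / 2) * t * exp (weight_rate beta L * t))) as [l [Hl Hb]].
  { intros n. eapply Rle_trans; [apply picard_step; assumption|]. right; ring. }
  replace (sol a t) with l.
  - split; [exact Hl|]. intros n. rewrite Rmult_assoc, (Rmult_comm _ ((/ 2) ^ n)), <- Rmult_assoc.
    eapply Rle_trans; [apply Hb| right; ring].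
  - unfold sol. rewrite (is_lim_seq_unique _ l); [reflexivity|]. apply is_lim_seq_Reals, Hl.
Qed.

End Iterates.

Lemma sol_bounds a t : 0 < a -> 0 <= t -> 0 <= sol a t <= a * t * t / 2.
Proof.
  intros Ha Ht. destruct (psi_lipschitz_on a (t + 1) Ha ltac:(lra)) as [L [HL HLip]].
  destruct (sol_limit a (t + 1) L ltac:(lra) HL HLip a t ltac:(lra) ltac:(lra)) as [_ Hb].
  set (C := 2 * (a * (t + 1) / 2 * t * exp (weight_rate a L * t))) in Hb.
  assert (Hpic : forall n, 0 <= picard a n t <= a * t * t / 2)
    by (intros n; apply (picard_admissible a n ltac:(lra)), Ht).
  split; apply (le_of_le_plus_pow_half _ _ C); intros n;
    specialize (Hb n); specialize (Hpic n);
    pose proof (Rle_abs (picard a n t - sol a t));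
    pose proof (Rabs_maj2 (picard a n t - sol a t)); lra.
Qed.

Lemma sol_0 a : 0 < a -> sol a 0 = 0.
Proof. intros Ha. destruct (sol_bounds a 0 Ha ltac:(lra)). nra. Qed.

(* Uniform limit on [[0, 2t + 1]] of the continuous Picard iterates. *)
Lemma sol_continuity_pt a t : 0 < a -> 0 < t -> continuity_pt (sol a) t.
Proof.
  intros Ha Ht. set (rho := 2 * t + 1).
  destruct (psi_lipschitz_on a rho Ha ltac:(unfold rho; lra)) as [L [HL HLip]].
  destruct (weight_rate_spec a L) as [HK _]; try lra.
  set (C := 2 * ((a * rho / 2) * rho * exp (weight_rate a L * rho))).
  assert (Hu : forall n y, 0 <= y <= rho -> Rabs (picard a n y - sol a y) <= C * (/ 2) ^ n).
  { intros n y Hy.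
    destruct (sol_limit a rho L ltac:(unfold rho; lra) HL HLip a y ltac:(lra) Hy) as [_ Hb].
    eapply Rle_trans; [apply Hb|]. unfold C.
    apply Rmult_le_compat_r; [left; apply pow_half_pos|]. apply Rmult_le_compat_l; [lra|].
    pose proof (exp_le_exp (weight_rate a L * y) (weight_rate a L * rho) ltac:(nra)).
    pose proof (exp_pos (weight_rate a L * y)).
    assert (0 <= a * rho / 2) by (unfold rho; apply Rlt_le, Rdiv_lt_0_compat; nra).
    apply Rmult_le_compat; [nra| lra | apply Rmult_le_compat_l; lra | lra]. }
  apply continuity_pt_of_eps. intros eps He.
  destruct (scaled_pow_half_small C (eps / 3)) as [N HN]; [lra|].
  specialize (HN N (le_n N)).
  destruct (continuity_pt_eps _ _ (proj1 (picard_admissible a N ltac:(lra)) t Ht) (eps / 3)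
              ltac:(lra)) as [d [Hd Hx]].
  exists (Rmin d t). split; [apply Rmin_pos; lra|].
  intros x Hxt.
  pose proof (Rmin_l d t). pose proof (Rmin_r d t).
  specialize (Hx x ltac:(lra)). assert (Hx' : Rabs (x - t) < t) by lra.
  apply Rabs_def2 in Hx'.
  pose proof (Hu N x ltac:(unfold rho; lra)). pose proof (Hu N t ltac:(unfold rho; lra)).
  replace (sol a x - sol a t) with
    (- (picard a N x - sol a x) + (picard a N x - picard a N t) + (picard a N t - sol a t))
    by ring.
  eapply Rle_lt_trans; [apply Rabs_triang|].
  eapply Rle_lt_trans; [apply Rplus_le_compat_r, Rabs_triang|].
  rewrite Rabs_Ropp. lra.
Qed.

Lemma sol_admissible a : 0 < a -> admissible a (sol a).
Proof.
  intros Ha. split.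
  - intros r Hr. apply sol_continuity_pt; assumption.
  - intros r Hr. apply sol_bounds; assumption.
Qed.

(* Pass to the limit in [picard a (S n) = picard_map a (picard a n)]. *)
Lemma sol_fixed a r : 0 < a -> 0 <= r -> picard_map a (sol a) r = sol a r.
Proof.
  intros Ha Hr. set (rho := r + 1). assert (Hrho : 0 < rho) by (unfold rho; lra).
  destruct (psi_lipschitz_on a rho Ha Hrho) as [L [HL HLip]].
  destruct (weight_rate_spec a L) as [HK HKL]; try lra.
  assert (Hlim : forall t, 0 <= t <= rho -> Un_cv (fun n => picard a n t) (sol a t) /\
            forall n, Rabs (picard a n t - sol a t)
              <= 2 * ((a * rho / 2) * t * exp (weight_rate a L * t)) * (/ 2) ^ n)
    by (intros t Ht; apply (sol_limit a rho L); try assumption; unfold rho in *; lra).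
  apply (UL_sequence (fun n => picard a (S n) r)).
  - apply (Un_cv_of_pow_half_bound _ _ ((a * rho / 2) * r * exp (weight_rate a L * r))).
    intros n. simpl. rewrite <- Rabs_Ropp, Ropp_minus_distr.
    pose proof (pow_half_pos n).
    eapply Rle_trans.
    + apply (picard_map_diff a rho L (weight_rate a L) (a * rho * (/ 2) ^ n));
        try assumption; try lra; try nra;
        try (apply sol_admissible; lra); try (apply picard_admissible; lra);
        try (unfold rho; lra).
      { apply Rmult_le_pos; [nra| lra]. }
      intros t Ht. rewrite <- Rabs_Ropp, Ropp_minus_distr.
      eapply Rle_trans; [apply (proj2 (Hlim t Ht))| right; field].
    + rewrite Rminus_diag, Rabs_R0. right. field.
  - intros eps He. destruct (proj1 (Hlim r ltac:(unfold rho; lra)) eps He) as [N HN].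
    exists N. intros n Hn. apply HN. lia.
Qed.

Definition dsol (a r : R) := a * r * exp (- psi_int (sol a) r).

Lemma sol_derive a r : 0 < a -> 0 < r -> is_derive (sol a) r (dsol a r).
Proof.
  intros Ha Hr. apply (is_derive_ext_loc (picard_map a (sol a))).
  - exists (mkposreal r Hr). intros y Hy. change (Rabs (y - r) < r) in Hy.
    apply Rabs_def2 in Hy. apply sol_fixed; lra.
  - apply (picard_map_derive a); [lra | apply sol_admissible, Ha].
Qed.

Lemma sol_param_close beta rho L a a' t : 0 < rho -> 0 < L ->
  lipschitz_upto psi (beta * rho / 2) L ->
  0 < a <= beta -> 0 < a' <= beta -> 0 <= t <= rho ->
  Rabs (sol a t - sol a' t) <= (2 * Rabs (a - a') * rho) * t * exp (weight_rate beta L * t).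
Proof.
  intros Hrho HL HLip Ha Ha' Ht.
  destruct (sol_limit beta rho L Hrho HL HLip a t Ha Ht) as [_ B1].
  destruct (sol_limit beta rho L Hrho HL HLip a' t Ha' Ht) as [_ B2].
  apply (le_of_le_plus_pow_half _ _
           (2 * (2 * ((beta * rho / 2) * t * exp (weight_rate beta L * t))))).
  intros n. specialize (B1 n). specialize (B2 n).
  pose proof (picard_param beta rho L Hrho HL HLip a a' n t Ha Ha' Ht).
  replace (sol a t - sol a' t) with
    (- (picard a n t - sol a t) + (picard a n t - picard a' n t) + (picard a' n t - sol a' t))
    by ring.
  eapply Rle_trans; [apply Rabs_triang|].
  eapply Rle_trans; [apply Rplus_le_compat_r, Rabs_triang|].
  rewrite Rabs_Ropp. lra.
Qed.

Lemma sol_param beta rho : 0 < beta -> 0 < rho ->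
  exists C, 0 < C /\ forall a a', 0 < a <= beta -> 0 < a' <= beta ->
    Rabs (sol a rho - sol a' rho) <= C * Rabs (a - a') /\
    Rabs (dsol a rho - dsol a' rho) <= C * Rabs (a - a').
Proof.
  intros Hb Hr.
  destruct (psi_lipschitz_on beta rho Hb Hr) as [L [HL HLip]].
  set (K := weight_rate beta L).
  destruct (weight_rate_spec beta L) as [HK HKL]; try lra. fold K in HK, HKL.
  pose proof (exp_pos (K * rho)).
  set (C1 := 2 * rho * rho * exp (K * rho)).
  set (C2 := rho + beta * rho * (L * (2 * rho) / K) * exp (K * rho)).
  assert (HC1 : 0 < C1) by (unfold C1; apply Rmult_lt_0_compat; nra).
  assert (HC2 : 0 < C2).
  { unfold C2. assert (0 < L * (2 * rho) / K) by (apply Rdiv_lt_0_compat; nra).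
    assert (0 < beta * rho) by nra.
    assert (0 < beta * rho * (L * (2 * rho) / K)) by nra. nra. }
  exists (C1 + C2). split; [lra|]. intros a a' Ha Ha'.
  pose proof (Rabs_pos (a - a')).
  pose proof (fun t => sol_param_close beta rho L a a' t Hr HL HLip) as Hclose.
  split.
  - eapply Rle_trans; [apply Hclose; lra|].
    assert (0 <= C2 * Rabs (a - a')) by nra. fold K. unfold C1. nra.
  - unfold dsol.
    apply Rle_trans with (Rabs (a - a') * rho
                          + beta * rho * (L * (2 * Rabs (a - a') * rho) / K) * exp (K * rho)).
    + apply (picard_integrand_diff beta rho L K (2 * Rabs (a - a') * rho));
        try exact HLip; try (apply sol_admissible; lra); try lra; try nra.
      intros t Ht. apply Hclose; lra.
    + assert (0 <= C1 * Rabs (a - a')) by nra.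
      replace (beta * rho * (L * (2 * Rabs (a - a') * rho) / K) * exp (K * rho))
        with (beta * rho * (L * (2 * rho) / K) * exp (K * rho) * Rabs (a - a'))
        by (field; lra).
      unfold C2. nra.
Qed.

Lemma dsol_pos a r : 0 < a -> 0 < r -> 0 < dsol a r.
Proof.
  intros Ha Hr. unfold dsol. pose proof (exp_pos (- psi_int (sol a) r)).
  apply Rmult_lt_0_compat; [nra| lra].
Qed.

Lemma sol_nondecreasing a x y : 0 < a -> 0 <= x <= y -> sol a x <= sol a y.
Proof.
  intros Ha Hxy. destruct (Req_dec x 0) as [->|Hx].
  - rewrite sol_0 by exact Ha. apply sol_bounds; lra.
  - apply (nondecreasing_of_derive_nonneg _ (dsol a)); try lra.
    + intros t Ht. apply sol_continuity_pt; lra.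
    + intros t Ht. apply sol_derive; lra.
    + intros t Ht. left. apply dsol_pos; lra.
Qed.

Lemma sol_abs_continuity a : 0 < a -> continuity (fun t => sol a (Rabs t)).
Proof.
  intros Ha t. destruct (Req_dec t 0) as [->|Ht].
  - apply continuity_pt_of_eps. intros eps He.
    exists (Rmin 1 (eps / (a + 1))). split.
    { apply Rmin_pos; [lra| apply Rdiv_lt_0_compat; lra]. }
    intros x Hx. rewrite Rabs_R0, sol_0, Rminus_0_r in * by exact Ha.
    pose proof (Rmin_l 1 (eps / (a + 1))). pose proof (Rmin_r 1 (eps / (a + 1))).
    pose proof (Rabs_pos x).
    destruct (sol_bounds a (Rabs x) Ha (Rabs_pos x)).
    rewrite Rabs_right by lra.
    apply Rle_lt_trans with (a * Rabs x * Rabs x / 2); [lra|].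
    assert (Hx' : (a + 1) * Rabs x < eps).
    { replace eps with ((a + 1) * (eps / (a + 1))) by (field; lra).
      apply Rmult_lt_compat_l; lra. }
    assert (a * Rabs x * Rabs x <= a * Rabs x) by (assert (0 <= a * Rabs x) by nra; nra).
    nra.
  - apply (continuity_pt_comp Rabs (sol a)); [apply Rcontinuity_abs|].
    apply sol_continuity_pt; [exact Ha| apply Rabs_pos_lt, Ht].
Qed.

Lemma sol_abs_derive a t : 0 < a -> 0 < t ->
  is_derive (fun t => sol a (Rabs t)) t (dsol a t).
Proof.
  intros Ha Ht. apply (is_derive_ext_loc (sol a)).
  - exists (mkposreal t Ht). intros y Hy. change (Rabs (y - t) < t) in Hy.
    apply Rabs_def2 in Hy. rewrite Rabs_right by lra. reflexivity.
  - apply sol_derive; assumption.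
Qed.

Lemma psi_int_sol_derive a s : 0 < a -> 0 < s ->
  is_derive (psi_int (sol a)) s (psi (sol a s / s)).
Proof.
  intros Ha Hs.
  pose proof (psi_int_derive a (sol a) ltac:(lra) (sol_admissible a Ha) s) as D.
  unfold psi_quot in D. rewrite Rabs_right in D by lra. exact D.
Qed.

Lemma sol_crosses a x y c : 0 < a -> 0 <= x <= y ->
  sol a x < c <= sol a y -> exists z, x <= z <= y /\ sol a z = c.
Proof.
  intros Ha Hxy [H1 H2].
  destruct (Req_dec (sol a y) c) as [E|E]; [exists y; split; [lra| exact E]|].
  assert (Hlt : x < y) by (destruct (Req_dec x y) as [->|]; lra).
  destruct (IVT (fun t => sol a (Rabs t) - c) x y) as [z [Hz Ez]].
  - pose proof (sol_abs_continuity a Ha). solve_continuity.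
  - exact Hlt.
  - rewrite Rabs_right by lra. lra.
  - rewrite Rabs_right by lra. lra.
  - rewrite Rabs_right in Ez by lra. exists z. split; lra.
Qed.

Lemma sol_lower_bound a r : 0 < a -> 0 <= r -> a * exp (- A * r) * r * r / 2 <= sol a r.
Proof.
  intros Ha Hr. rewrite <- (sol_fixed a r Ha Hr). unfold picard_map.
  pose proof (sol_admissible a Ha) as Hadm.
  apply Rle_trans with (RInt (fun s => (a * exp (- A * r)) * s) 0 r).
  - right. rewrite (RInt_antiderivative (fun s => a * exp (- A * r) * s * s / 2));
      [field | lra | | solve_continuity].
    intros x _. auto_derive; auto. field.
  - apply RInt_le_continuity; [lra | solve_continuity | |].
    { apply (picard_integrand_continuity a (sol a)); [lra| exact Hadm]. }
    intros s Hs. destruct (psi_int_bounds a (sol a) ltac:(lra) Hadm s ltac:(lra)) as [_ HI].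
    pose proof (exp_le_exp (- A * r) (- psi_int (sol a) s)).
    assert (A * s <= A * r) by (pose proof (psi_bounds 0); apply Rmult_le_compat_l; lra).
    pose proof (exp_pos (- A * r)). assert (0 <= a * s) by nra. nra.
Qed.

Definition d2sol (a r : R) := a * exp (- psi_int (sol a) r) - dsol a r * psi (sol a r / r).

Lemma dsol_derive a r : 0 < a -> 0 < r -> is_derive (dsol a) r (d2sol a r).
Proof.
  intros Ha Hr. pose proof (psi_int_sol_derive a r Ha Hr) as DI.
  unfold d2sol, dsol. auto_derive.
  - exists (psi (sol a r / r)). exact DI.
  - replace (Derive (fun x => psi_int (sol a) x) r) with (psi (sol a r / r))
      by (symmetry; apply is_derive_unique, DI).
    ring.
Qed.

Lemma sol_param_near a rho e : 0 < a -> 0 < rho -> 0 < e ->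
  exists delta, 0 < delta /\ forall a', 0 < a' -> Rabs (a' - a) <= delta ->
    Rabs (sol a' rho - sol a rho) <= e /\ Rabs (dsol a' rho - dsol a rho) <= e.
Proof.
  intros Ha Hr He.
  destruct (sol_param (a + 1) rho ltac:(lra) Hr) as [C [HC Hp]].
  exists (Rmin 1 (e / C)). split; [apply Rmin_pos; [lra| apply Rdiv_lt_0_compat; lra]|].
  intros a' Ha' Hd. pose proof (Rmin_l 1 (e / C)). pose proof (Rmin_r 1 (e / C)).
  pose proof (Rle_abs (a' - a)).
  destruct (Hp a' a ltac:(lra) ltac:(lra)) as [P1 P2].
  assert (C * Rabs (a' - a) <= e).
  { apply Rle_trans with (C * (e / C)); [apply Rmult_le_compat_l; lra| right; field; lra]. }
  lra.
Qed.

(** * Shooting on [a = v''(0)] *)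

Section Shooting.

Variables (phi0 b : R).
Hypotheses (A_pos : 0 < A) (phi0_pos : 0 < phi0) (b_large : 4 / phi0 < b)
  (psi_le_linear : forall p, 0 <= p -> psi p <= phi0 * p)
  (psi_ge_linear_near_0 :
     forall c, c < phi0 -> exists d, 0 < d /\ forall p, 0 <= p <= d -> c * p <= psi p).

Definition stays_below (a : R) := 0 < a /\ forall r, 0 <= r -> sol a r < b.

Lemma b_pos : 0 < b.
Proof. apply Rlt_trans with (4 / phi0); [apply Rdiv_lt_0_compat|]; lra. Qed.

(* [r v' - 2 v + (c/2) v^2] is nonincreasing as long as [psi (v/r) >= c v/r]. *)
Lemma energy_nonpos a c r1 : 0 < a -> 0 < r1 ->
  (forall t, 0 < t < r1 -> c * sol a t <= t * psi (sol a t / t)) ->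
  r1 * dsol a r1 - 2 * sol a r1 + c / 2 * sol a r1 ^ 2 <= 0.
Proof.
  intros Ha Hr1 Hpsi.
  set (w := fun t => sol a (Rabs t)).
  set (I := psi_int (sol a)).
  set (h := fun t => a * t * t * exp (- I t) - 2 * w t + c / 2 * w t ^ 2).
  assert (Hh : - h 0 <= - h r1).
  { apply (nondecreasing_of_derive_nonneg (fun t => - h t)
             (fun t => - (dsol a t * (c * sol a t - t * psi (sol a t / t))))); try lra.
    - intros t _. pose proof (sol_abs_continuity a Ha) as Cw. fold w in Cw.
      pose proof (psi_int_continuity a (sol a) ltac:(lra) (sol_admissible a Ha)) as CI.
      fold I in CI. unfold h, pow. solve_continuity.
    - intros t Ht.
      pose proof (sol_abs_derive a t Ha ltac:(lra)) as Dw. fold w in Dw.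
      pose proof (psi_int_sol_derive a t Ha ltac:(lra)) as DI. fold I in DI.
      unfold h. auto_derive; [repeat split; eexists; eassumption|].
      replace (Derive (fun x => w x) t) with (dsol a t)
        by (symmetry; apply is_derive_unique, Dw).
      replace (Derive (fun x => I x) t) with (psi (sol a t / t))
        by (symmetry; apply is_derive_unique, DI).
      unfold w, dsol. fold I. rewrite Rabs_right by lra. field.
    - intros t Ht. specialize (Hpsi t Ht). pose proof (dsol_pos a t Ha ltac:(lra)). nra. }
  unfold h, w in Hh. rewrite Rabs_R0, sol_0, (Rabs_right r1) in Hh by lra.
  unfold dsol. fold I. simpl in *. nra.
Qed.

Lemma quot_le_of_quadratic_bound v t d : 0 < d -> 0 < t ->
  v <= b -> v <= d * d * t * t / b -> v / t <= d.
Proof.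
  intros Hd Ht H1 H2. pose proof b_pos.
  apply (Rmult_le_reg_r t); [lra|]. replace (v / t * t) with v by (field; lra).
  destruct (Rle_dec (d * t) b) as [Hdt|Hdt].
  - apply Rle_trans with (d * d * t * t / b); [exact H2|].
    apply (Rmult_le_reg_r b); [lra|].
    replace (d * d * t * t / b * b) with ((d * t) * (d * t)) by (field; lra).
    assert (0 <= d * t) by nra. nra.
  - apply Rnot_le_lt in Hdt. lra.
Qed.

Lemma exists_stays_below : exists a, stays_below a.
Proof.
  pose proof b_pos as Hb0.
  assert (Hb4 : 4 / b < phi0).
  { apply (Rmult_lt_compat_l phi0) in b_large; [|lra].
    replace (phi0 * (4 / phi0)) with 4 in b_large by (field; lra).
    apply (Rmult_lt_reg_r b); [lra|]. replace (4 / b * b) with 4 by (field; lra). lra. }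
  set (c := (phi0 + 4 / b) / 2).
  assert (Hcb : 4 < c * b).
  { replace (c * b) with ((phi0 * b + 4 / b * b) / 2) by (unfold c; field; lra).
    replace (4 / b * b) with 4 by (field; lra). apply (Rmult_lt_compat_r b) in Hb4; [|lra].
    replace (4 / b * b) with 4 in Hb4 by (field; lra). lra. }
  destruct (psi_ge_linear_near_0 c ltac:(unfold c; lra)) as [d [Hd Hpd]].
  set (a := 2 * d * d / b).
  assert (Ha : 0 < a) by (unfold a; apply Rdiv_lt_0_compat; nra).
  exists a. split; [exact Ha|]. intros r Hr. apply Rnot_le_lt. intros Hge.
  destruct (sol_crosses a 0 r b Ha ltac:(lra) ltac:(rewrite sol_0; lra)) as [r1 [Hr1 Er1]].
  assert (Hr1p : 0 < r1) by (destruct (Req_dec r1 0) as [->|]; [rewrite sol_0 in Er1|]; lra).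
  assert (Hquot : forall t, 0 < t < r1 -> c * sol a t <= t * psi (sol a t / t)).
  { intros t Ht. destruct (sol_bounds a t Ha ltac:(lra)) as [G1 G2].
    assert (Hq : sol a t / t <= d).
    { apply quot_le_of_quadratic_bound; try lra.
      - rewrite <- Er1. apply sol_nondecreasing; lra.
      - replace (d * d * t * t / b) with (a * t * t / 2) by (unfold a; field; lra). exact G2. }
    specialize (Hpd _ (conj (Rdiv_le_0_compat _ _ G1 (proj1 Ht)) Hq)).
    replace (c * sol a t) with (t * (c * (sol a t / t))) by (field; lra).
    apply Rmult_le_compat_l; lra. }
  pose proof (energy_nonpos a c r1 Ha Hr1p Hquot) as He. rewrite Er1 in He.
  pose proof (dsol_pos a r1 Ha Hr1p).
  assert (0 < b * (c * b - 4)) by (apply Rmult_lt_0_compat; lra).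
  simpl in He. nra.
Qed.

Lemma eventually_not_stays_below : exists ahi, forall a, stays_below a -> a < ahi.
Proof.
  set (r := / A). assert (Hr : 0 < r) by (apply Rinv_0_lt_compat, A_pos).
  assert (Ar : A * r = 1) by (unfold r; field; lra).
  exists (2 * A * A * (Rabs b + 1) * exp 1). intros a [Ha Hbelow].
  apply Rnot_le_lt. intros Hle.
  pose proof (sol_lower_bound a r Ha (Rlt_le _ _ Hr)) as Hlow.
  replace (- A * r) with (- 1) in Hlow by lra.
  specialize (Hbelow r (Rlt_le _ _ Hr)).
  assert (E1 : exp (-1) * exp 1 = 1) by (rewrite <- exp_plus; replace (-1 + 1) with 0 by ring; apply exp_0).
  pose proof (exp_pos (-1)). pose proof (Rle_abs b).
  assert (Hq : 0 < exp (-1) * r * r / 2)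
    by (apply Rdiv_lt_0_compat; [repeat apply Rmult_lt_0_compat|]; lra).
  assert (2 * A * A * (Rabs b + 1) * exp 1 * (exp (-1) * r * r / 2) = Rabs b + 1).
  { replace (2 * A * A * (Rabs b + 1) * exp 1 * (exp (-1) * r * r / 2))
      with ((Rabs b + 1) * (exp (-1) * exp 1) * ((A * r) * (A * r))) by field.
    rewrite E1, Ar. ring. }
  assert (2 * A * A * (Rabs b + 1) * exp 1 * (exp (-1) * r * r / 2)
          <= a * (exp (-1) * r * r / 2)) by (apply Rmult_le_compat_r; lra).
  replace (a * exp (-1) * r * r / 2) with (a * (exp (-1) * r * r / 2)) in Hlow by field.
  lra.
Qed.

(* Otherwise [psi (v/t) <= 2/t], so [v' >= const / t] and [v] is unbounded. *)
Lemma bounded_sol_exceeds a M : 0 < a -> (forall r, 0 <= r -> sol a r <= M) ->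
  exists r1, 1 <= r1 /\ 2 < phi0 * sol a r1.
Proof.
  intros Ha Hb. apply NNPP. intros NE.
  set (I := psi_int (sol a)).
  assert (HI : forall t, 1 <= t -> I t - I 1 <= 2 * ln t - 2 * ln 1).
  { intros t Ht.
    apply (increment_le_of_derive_le I (fun t => 2 * ln t)
             (fun s => psi (sol a s / s)) (fun t => 2 / t)); [exact Ht | | |].
    - intros x Hx. apply psi_int_sol_derive; lra.
    - intros x Hx. auto_derive; [lra| field; lra].
    - intros x Hx.
      assert (Hq : 0 <= sol a x / x)
        by (apply Rdiv_le_0_compat; [apply sol_bounds|]; lra).
      assert (phi0 * sol a x <= 2)
        by (apply Rnot_lt_le; intros Hlt; apply NE; exists x; split; lra).
      pose proof (psi_le_linear _ Hq).
      replace (phi0 * (sol a x / x)) with ((phi0 * sol a x) / x) in * by (field; lra).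
      apply Rle_trans with (phi0 * sol a x / x); [lra|].
      apply Rmult_le_compat_r; [left; apply Rinv_0_lt_compat; lra| lra]. }
  rewrite ln_1 in HI.
  destruct (unbounded_of_derive_ge_inv (sol a) (dsol a) 1 (a * exp (- I 1)) M)
    as [t [Ht Hbig]]; [lra | pose proof (exp_pos (- I 1)); nra | | |].
  - intros t Ht. apply sol_derive; lra.
  - intros t Ht. specialize (HI t Ht).
    assert (Ee : exp (- I 1 - 2 * ln t) = exp (- I 1) / (t * t)).
    { replace (- I 1 - 2 * ln t) with (- I 1 - ln (t * t)) by (rewrite ln_mult by lra; ring).
      unfold Rminus. rewrite exp_plus, (exp_Ropp (ln (t * t))), exp_ln by nra. reflexivity. }
    pose proof (exp_le_exp (- I 1 - 2 * ln t) (- I t) ltac:(lra)) as Hexp. rewrite Ee in Hexp.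
    unfold dsol. fold I.
    replace (a * exp (- I 1) / t) with (a * t * (exp (- I 1) / (t * t))) by (field; lra).
    apply Rmult_le_compat_l; [nra| exact Hexp].
  - specialize (Hb t ltac:(lra)). lra.
Qed.

Lemma bounded_sol_flux_small a M th r0 : 0 < a -> 0 < th -> 0 < r0 ->
  (forall r, 0 <= r -> sol a r <= M) -> exists rr, r0 <= rr /\ rr * dsol a rr <= th.
Proof.
  intros Ha Hth Hr0 Hb. apply NNPP. intros NE.
  destruct (unbounded_of_derive_ge_inv (sol a) (dsol a) r0 th M) as [t [Ht Hbig]];
    [exact Hr0 | exact Hth | | |].
  - intros t Ht. apply sol_derive; lra.
  - intros t Ht. apply Rnot_lt_le. intros Hlt. apply NE. exists t. split; [exact Ht|].
    apply (Rmult_lt_compat_r t) in Hlt; [|lra].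
    replace (th / t * t) with th in Hlt by (field; lra). lra.
  - specialize (Hb t ltac:(lra)). lra.
Qed.

Lemma psi_quot_ge_inv a rr kap c' d t : 0 < a -> 0 < rr -> 0 < c' ->
  (forall p, 0 <= p <= d -> c' * p <= psi p) -> b / rr <= d -> kap <= c' * sol a rr ->
  rr <= t -> sol a t <= b -> kap / t <= psi (sol a t / t).
Proof.
  intros Ha Hrr Hc Hpd Hbd Hkap Ht Hvb.
  assert (V2 : sol a rr <= sol a t) by (apply sol_nondecreasing; lra).
  assert (Hp1 : 0 <= sol a t / t) by (apply Rdiv_le_0_compat; [apply sol_bounds|]; lra).
  assert (Hp2 : sol a t / t <= d).
  { apply Rle_trans with (b / rr); [|exact Hbd]. apply Rle_trans with (b / t).
    - apply Rmult_le_compat_r; [left; apply Rinv_0_lt_compat|]; lra.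
    - apply Rmult_le_compat_l; [pose proof b_pos; lra| apply Rinv_le_contravar; lra]. }
  apply Rle_trans with (c' * (sol a t / t)); [|apply Hpd; lra].
  unfold Rdiv. rewrite <- Rmult_assoc.
  apply Rmult_le_compat_r; [left; apply Rinv_0_lt_compat; lra|].
  apply Rle_trans with (c' * sol a rr); [exact Hkap| apply Rmult_le_compat_l; lra].
Qed.

(* While [v <= b] beyond [rr], [psi (v/t) >= kap / t], so [v'] decays like
   [t^(1 - kap)] and the remaining increase of [v] is at most [rr v'(rr) / (kap - 2)]. *)
Lemma sol_tail_bound a rr kap c' d r2 : 0 < a -> 0 < rr -> 2 < kap -> 0 < c' ->
  (forall p, 0 <= p <= d -> c' * p <= psi p) -> b / rr <= d -> kap <= c' * sol a rr ->
  rr <= r2 -> sol a r2 <= b ->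
  sol a r2 <= sol a rr + rr * dsol a rr / (kap - 2).
Proof.
  intros Ha Hrr Hk Hc Hpd Hbd Hkap Hr2 Hvb.
  set (I := psi_int (sol a)).
  assert (HI : forall t, rr <= t <= r2 -> kap * ln t - kap * ln rr <= I t - I rr).
  { intros t Ht.
    apply (increment_le_of_derive_le (fun t => kap * ln t) I
             (fun t => kap / t) (fun s => psi (sol a s / s))); [lra | | |].
    - intros x Hx. auto_derive; [lra| field; lra].
    - intros x Hx. apply psi_int_sol_derive; lra.
    - intros x Hx. apply (psi_quot_ge_inv a rr kap c' d); try lra; [exact Hpd|].
      apply Rle_trans with (sol a r2); [apply sol_nondecreasing; lra| exact Hvb]. }
  set (D := rr * dsol a rr).
  assert (HD : 0 <= D) by (unfold D; pose proof (dsol_pos a rr Ha Hrr); nra).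
  set (H := fun t => D / (kap - 2) * exp ((kap - 2) * (ln rr - ln t))).
  assert (Hinc : sol a r2 - sol a rr <= - H r2 - - H rr).
  { apply (increment_le_of_derive_le (sol a) (fun t => - H t) (dsol a)
             (fun t => D * exp ((kap - 2) * (ln rr - ln t)) / t)); [exact Hr2 | | |].
    - intros x Hx. apply sol_derive; lra.
    - intros x Hx. unfold H. auto_derive; [lra|].
      replace (ln rr + - ln x) with (ln rr - ln x) by ring. field. lra.
    - intros t Ht. specialize (HI t ltac:(lra)).
      set (v := ln rr - ln t).
      assert (Hv : exp v = rr / t) by (apply exp_ln_ratio; lra).
      pose proof (exp_le_exp (- I t) (- I rr + kap * v) ltac:(unfold v; lra)) as E1.
      rewrite exp_plus in E1.
      assert (E2 : exp (kap * v) = exp ((kap - 2) * v) * (rr / t) * (rr / t)).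
      { rewrite <- Hv, <- !exp_plus. f_equal. ring. }
      unfold D, dsol. fold I.
      apply Rle_trans with (a * t * (exp (- I rr) * exp (kap * v))).
      + apply Rmult_le_compat_l; [nra| exact E1].
      + right. rewrite E2. field. lra. }
  unfold H in Hinc. rewrite Rminus_diag, Rmult_0_r, exp_0 in Hinc.
  assert (0 <= D / (kap - 2) * exp ((kap - 2) * (ln rr - ln r2)))
    by (apply Rmult_le_pos; [apply Rdiv_le_0_compat; lra| left; apply exp_pos]).
  unfold D in *. lra.
Qed.

Lemma stays_below_of_flux a rr kap c' d : 0 < a -> 0 < rr -> 2 < kap -> 0 < c' ->
  (forall p, 0 <= p <= d -> c' * p <= psi p) -> b / rr <= d -> kap <= c' * sol a rr ->
  sol a rr + rr * dsol a rr / (kap - 2) < b -> stays_below a.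
Proof.
  intros Ha Hrr Hk Hc Hpd Hbd Hkap Hlt. split; [exact Ha|]. intros r Hr.
  assert (0 <= rr * dsol a rr / (kap - 2))
    by (pose proof (dsol_pos a rr Ha Hrr); apply Rdiv_le_0_compat; nra).
  destruct (Rle_dec r rr) as [Hle|Hgt].
  - pose proof (sol_nondecreasing a r rr Ha ltac:(lra)). lra.
  - apply Rnot_le_lt. intros Hge.
    destruct (sol_crosses a rr r b Ha ltac:(lra) ltac:(lra)) as [r2 [Hr2 Er2]].
    pose proof (sol_tail_bound a rr kap c' d r2 Ha Hrr Hk Hc Hpd Hbd Hkap
                  ltac:(lra) ltac:(lra)). lra.
Qed.

Lemma sol_le_of_approx a : 0 < a ->
  (forall eta, 0 < eta -> exists a', stays_below a' /\ a - eta < a' <= a) ->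
  forall r, 0 <= r -> sol a r <= b.
Proof.
  intros Ha Happ r Hr. apply Rnot_lt_le. intros Hgt.
  assert (Hr0 : 0 < r).
  { destruct (Req_dec r 0) as [->|]; [|lra]. rewrite sol_0 in Hgt by exact Ha.
    pose proof b_pos. lra. }
  destruct (sol_param_near a r (sol a r - b) Ha Hr0 ltac:(lra)) as [dl [Hdl Hnear]].
  destruct (Happ dl Hdl) as [a' [[Ha' Hbelow] Ha'a]].
  assert (Hd : Rabs (a' - a) <= dl) by (rewrite Rabs_left1; lra).
  destruct (Hnear a' Ha' Hd) as [P1 _].
  specialize (Hbelow r Hr). pose proof (Rabs_maj2 (sol a' r - sol a r)). lra.
Qed.

(* The hypotheses of [stays_below_of_flux] hold with a margin at [a], so they
   survive a small increase of [a]. *)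
Lemma stays_below_near a eps rr kap c' d : 0 < a -> 0 < eps -> 0 < rr -> 2 < kap ->
  0 < c' -> (forall p, 0 <= p <= d -> c' * p <= psi p) -> b / rr <= d ->
  kap < c' * sol a rr -> sol a rr <= b - eps -> rr * dsol a rr <= eps * (kap - 2) / 4 ->
  exists eta, 0 < eta /\ stays_below (a + eta).
Proof.
  intros Ha He Hrr Hk Hc Hpd Hbd Hkap Hsol Hflux.
  set (e := Rmin (eps / 4) (Rmin (eps * (kap - 2) / (4 * rr)) ((c' * sol a rr - kap) / c'))).
  assert (He0 : 0 < e).
  { unfold e. repeat apply Rmin_pos; apply Rdiv_lt_0_compat; nra. }
  assert (He1 : e <= eps / 4) by apply Rmin_l.
  assert (He2 : rr * e <= eps * (kap - 2) / 4).
  { apply Rle_trans with (rr * (eps * (kap - 2) / (4 * rr))); [|right; field; lra].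
    apply Rmult_le_compat_l; [lra|]. unfold e. eapply Rle_trans; [apply Rmin_r| apply Rmin_l]. }
  assert (He3 : c' * e <= c' * sol a rr - kap).
  { apply Rle_trans with (c' * ((c' * sol a rr - kap) / c')); [|right; field; lra].
    apply Rmult_le_compat_l; [lra|]. unfold e. eapply Rle_trans; apply Rmin_r. }
  destruct (sol_param_near a rr e Ha Hrr He0) as [dl [Hdl Hnear]].
  exists dl. split; [exact Hdl|].
  assert (Hdl' : Rabs (a + dl - a) <= dl)
    by (replace (a + dl - a) with dl by ring; rewrite Rabs_right; lra).
  destruct (Hnear (a + dl) ltac:(lra) Hdl') as [P1 P2].
  pose proof (Rle_abs (sol (a + dl) rr - sol a rr)).
  pose proof (Rabs_maj2 (sol (a + dl) rr - sol a rr)).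
  pose proof (Rle_abs (dsol (a + dl) rr - dsol a rr)).
  apply (stays_below_of_flux (a + dl) rr kap c' d); try exact Hpd; try lra.
  - assert (c' * (sol a rr - e) <= c' * sol (a + dl) rr) by (apply Rmult_le_compat_l; lra).
    lra.
  - assert (rr * dsol (a + dl) rr <= eps * (kap - 2) / 2) by nra.
    assert (rr * dsol (a + dl) rr / (kap - 2) <= eps / 2).
    { apply (Rmult_le_reg_r (kap - 2)); [lra|].
      replace (rr * dsol (a + dl) rr / (kap - 2) * (kap - 2))
        with (rr * dsol (a + dl) rr) by (field; lra). lra. }
    lra.
Qed.

(* By [bounded_sol_exceeds], [v] is already above [2 / phi0] at some [r1], which
   gives the slope [kap > 2]; the flux [rr v'(rr)] is small at some large [rr]. *)
Lemma stays_below_above a eps : 0 < a -> 0 < eps ->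
  (forall r, 0 <= r -> sol a r <= b - eps) -> exists eta, 0 < eta /\ stays_below (a + eta).
Proof.
  intros Ha He Hbnd.
  destruct (bounded_sol_exceeds a (b - eps) Ha Hbnd) as [r1 [Hr1 Hq]].
  set (v1 := sol a r1) in *.
  assert (Hv1 : 0 < v1) by (apply Rnot_ge_lt; intros Hle; nra).
  set (kap := (phi0 * v1 + 2) / 2).
  set (c' := (phi0 + kap / v1) / 2).
  assert (Hcv : c' * v1 = (phi0 * v1 + kap) / 2) by (unfold c'; field; lra).
  assert (Hc'v1 : kap < c' * v1) by (unfold kap in *; lra).
  assert (Hc' : c' < phi0) by (apply (Rmult_lt_reg_r v1); [lra|]; unfold kap in *; lra).
  assert (Hc'0 : 0 < c') by (apply (Rmult_lt_reg_r v1); [lra|]; unfold kap in *; lra).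
  destruct (psi_ge_linear_near_0 c' Hc') as [d [Hd Hpd]].
  destruct (bounded_sol_flux_small a (b - eps) (eps * (kap - 2) / 4) (Rmax r1 (b / d)))
    as [rr [Hrr Hflux]]; [exact Ha | apply Rdiv_lt_0_compat; unfold kap; nra | |exact Hbnd|].
  { apply Rlt_le_trans with r1; [lra| apply Rmax_l]. }
  pose proof (Rmax_l r1 (b / d)). pose proof (Rmax_r r1 (b / d)).
  pose proof (sol_nondecreasing a r1 rr Ha ltac:(lra)) as Hmono. fold v1 in Hmono.
  apply (stays_below_near a eps rr kap c' d); try assumption; try lra.
  - unfold kap. lra.
  - apply (Rmult_le_reg_r rr); [lra|]. replace (b / rr * rr) with b by (field; lra).
    replace b with (d * (b / d)) at 1 by (field; lra). apply Rmult_le_compat_l; lra.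
  - apply Rlt_le_trans with (c' * v1); [exact Hc'v1| apply Rmult_le_compat_l; lra].
  - apply Hbnd. lra.
Qed.

Lemma shooting : exists a, 0 < a /\ (forall r, 0 <= r -> sol a r <= b) /\
  (forall eps, 0 < eps -> exists r, 0 <= r /\ b - eps < sol a r).
Proof.
  destruct exists_stays_below as [a0 H0].
  destruct eventually_not_stays_below as [ahi Hhi].
  destruct (completeness stays_below) as [as_ [Hub Hlub]].
  { exists ahi. intros x Hx. left. apply Hhi, Hx. }
  { exists a0. exact H0. }
  assert (Has : 0 < as_) by (pose proof (Hub a0 H0); destruct H0; lra).
  assert (Happ : forall eta, 0 < eta -> exists a', stays_below a' /\ as_ - eta < a' <= as_).
  { intros eta He. apply NNPP. intros NE.
    assert (is_upper_bound stays_below (as_ - eta)).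
    { intros x Hx. apply Rnot_lt_le. intros Hlt. apply NE. exists x. split; [exact Hx|].
      split; [exact Hlt| apply Hub, Hx]. }
    specialize (Hlub _ H). lra. }
  exists as_. split; [exact Has|]. split; [exact (sol_le_of_approx as_ Has Happ)|].
  intros eps He. apply NNPP. intros NE.
  destruct (stays_below_above as_ eps Has He) as [eta [Heta Hs]].
  { intros r Hr. apply Rnot_lt_le. intros Hlt. apply NE. exists r. split; assumption. }
  specialize (Hub _ Hs). lra.
Qed.

End Shooting.

End IntegralEquation.

(** * From [phi] to [psi] *)

Lemma at_right_0_eps (f : R -> R) l : filterlim f (at_right 0) (locally l) ->
  forall eps, 0 < eps -> exists d, 0 < d /\ forall y, 0 < y < d -> Rabs (f y - l) < eps.
Proof.
  intros H eps He.
  destruct (H (ball l (mkposreal eps He)) (locally_ball l (mkposreal eps He))) as [d Hd].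
  exists d. split; [apply cond_pos|]. intros y Hy. apply (Hd y); [|lra].
  change (Rabs (y - 0) < d). rewrite Rminus_0_r, Rabs_right; lra.
Qed.

Lemma right_continuous_of_is_right_derive (f : R -> R) l : is_right_derive f 0 l ->
  forall eps, 0 < eps -> exists d, 0 < d /\ forall y, 0 < y < d -> Rabs (f y - f 0) < eps.
Proof.
  intros H eps He. destruct (at_right_0_eps _ _ H 1 ltac:(lra)) as [d1 [Hd1 Hf]].
  pose proof (Rabs_pos l).
  exists (Rmin d1 (eps / (Rabs l + 1))). split.
  { apply Rmin_pos; [lra| apply Rdiv_lt_0_compat; lra]. }
  intros y Hy. pose proof (Rmin_l d1 (eps / (Rabs l + 1))).
  pose proof (Rmin_r d1 (eps / (Rabs l + 1))).
  specialize (Hf y ltac:(lra)). rewrite Rminus_0_r in Hf.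
  assert (Hq : Rabs ((f y - f 0) / y) < Rabs l + 1).
  { replace ((f y - f 0) / y) with (((f y - f 0) / y - l) + l) by ring.
    eapply Rle_lt_trans; [apply Rabs_triang| lra]. }
  rewrite Rabs_div, (Rabs_right y) in Hq by lra.
  apply (Rmult_lt_compat_r y) in Hq; [|lra].
  replace (Rabs (f y - f 0) / y * y) with (Rabs (f y - f 0)) in Hq by (field; lra).
  assert ((Rabs l + 1) * y < eps).
  { replace eps with ((Rabs l + 1) * (eps / (Rabs l + 1))) by (field; lra).
    apply Rmult_lt_compat_l; lra. }
  lra.
Qed.

Lemma continuity_clamp (f : R -> R) : (forall x, 0 < x -> continuity_pt f x) ->
  (forall eps, 0 < eps -> exists d, 0 < d /\ forall y, 0 < y < d -> Rabs (f y - f 0) < eps) ->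
  continuity (fun p => f (Rmax 0 p)).
Proof.
  intros Hc H0 x. apply continuity_pt_of_eps. intros eps He.
  destruct (Rlt_dec 0 x) as [Hx|Hx].
  - destruct (continuity_pt_eps f x (Hc x Hx) eps He) as [d [Hd Hf]].
    exists (Rmin d x). split; [apply Rmin_pos; lra|]. intros y Hy.
    pose proof (Rmin_l d x). pose proof (Rmin_r d x).
    assert (Hy2 : Rabs (y - x) < x) by lra. apply Rabs_def2 in Hy2.
    rewrite (Rmax_right 0 y), (Rmax_right 0 x) by lra. apply Hf. lra.
  - apply Rnot_lt_le in Hx. destruct (Req_dec x 0) as [->|Hx0].
    + destruct (H0 eps He) as [d [Hd Hf]]. exists d. split; [exact Hd|]. intros y Hy.
      rewrite (Rmax_left 0 0), Rminus_0_r in * by lra.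
      destruct (Rle_dec y 0) as [Hy0|Hy0].
      * rewrite (Rmax_left 0 y), Rminus_diag, Rabs_R0 by lra. lra.
      * apply Rnot_le_lt in Hy0. rewrite (Rmax_right 0 y) by lra.
        rewrite Rabs_right in Hy by lra. apply Hf. lra.
    + exists (- x). split; [lra|]. intros y Hy. apply Rabs_def2 in Hy.
      rewrite (Rmax_left 0 y), (Rmax_left 0 x), Rminus_diag, Rabs_R0 by lra. lra.
Qed.

Definition psi_of (phi : R -> R) (p : R) := Rmax 0 p * phi (Rmax 0 p).

Lemma psi_of_nonneg phi p : 0 <= p -> psi_of phi p = p * phi p.
Proof. intros Hp. unfold psi_of. rewrite Rmax_right by exact Hp. reflexivity. Qed.

Section PhiToPsi.

Variables (phi : R -> R) (A : R).
Hypotheses (phi_C1 : C1_nonneg phi) (phi_nonneg : forall r, 0 <= r -> 0 <= phi r)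
  (phi_max : forall r, 0 <= r -> phi r <= phi 0)
  (phi_bound : forall r, 0 <= r -> Rabs (r * phi r) <= A).

Lemma phi_right_continuous :
  forall eps, 0 < eps -> exists d, 0 < d /\ forall y, 0 < y < d -> Rabs (phi y - phi 0) < eps.
Proof.
  destruct phi_C1 as [f' [_ [Hrd _]]]. exact (right_continuous_of_is_right_derive phi _ Hrd).
Qed.

Lemma phi_clamp_continuity : continuity (fun p => phi (Rmax 0 p)).
Proof.
  destruct phi_C1 as [f' [Hd _]]. apply continuity_clamp; [|exact phi_right_continuous].
  intros x Hx. apply (continuity_pt_of_is_derive _ _ (f' x)), Hd, Hx.
Qed.

Lemma psi_of_continuity : continuity (psi_of phi).
Proof.
  unfold psi_of. apply continuity_mult; [|exact phi_clamp_continuity].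
  apply (continuity_clamp (fun p => p)); [intros x _; apply continuity_pt_id|].
  intros eps He. exists eps. split; [exact He|]. intros y Hy.
  rewrite Rminus_0_r, Rabs_right; lra.
Qed.

Lemma psi_of_bounds p : 0 <= psi_of phi p <= A.
Proof.
  unfold psi_of. pose proof (Rmax_l 0 p). split.
  - apply Rmult_le_pos; [lra| apply phi_nonneg; lra].
  - eapply Rle_trans; [apply Rle_abs| apply phi_bound; lra].
Qed.

(* [phi] is Lipschitz on [[0, P]] with constant [max |phi'|] by the mean value theorem. *)
Lemma phi_lipschitz P : 0 <= P -> exists M, 0 <= M /\
  forall x y, 0 <= x <= P -> 0 <= y <= P -> Rabs (phi x - phi y) <= M * Rabs (x - y).
Proof.
  intros HP. destruct phi_C1 as [f' [Hd [_ [Hc Hlim]]]].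
  assert (Cf' : continuity (fun p => f' (Rmax 0 p))).
  { apply continuity_clamp.
    - intros x Hx. apply continuity_pt_filterlim, Hc, Hx.
    - exact (at_right_0_eps f' (f' 0) Hlim). }
  destruct (continuity_ab_maj (fun p => Rabs (f' (Rmax 0 p))) 0 P HP) as [Mx [HMx _]].
  { intros c _. apply (continuity_pt_comp (fun p => f' (Rmax 0 p)) Rabs);
      [apply Cf'| apply Rcontinuity_abs]. }
  exists (Rabs (f' (Rmax 0 Mx))). split; [apply Rabs_pos|]. intros x y Hx Hy.
  destruct (MVT_gen (fun p => phi (Rmax 0 p)) y x f') as [c [Hc1 Hc2]].
  - intros z Hz. assert (Hz0 : 0 < z)
      by (destruct Hz as [Hz _]; eapply Rle_lt_trans; [|exact Hz]; apply Rmin_glb; lra).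
    apply (is_derive_ext_loc phi); [|apply Hd, Hz0].
    exists (mkposreal z Hz0). intros w Hw. change (Rabs (w - z) < z) in Hw.
    apply Rabs_def2 in Hw. rewrite Rmax_right by lra. reflexivity.
  - intros z _. apply phi_clamp_continuity.
  - rewrite (Rmax_right 0 x), (Rmax_right 0 y) in Hc2 by lra. rewrite Hc2.
    assert (Hc0 : 0 <= c <= P).
    { destruct Hc1 as [Hc1 Hc1']. split.
      - eapply Rle_trans; [|exact Hc1]. apply Rmin_glb; lra.
      - eapply Rle_trans; [exact Hc1'|]. apply Rmax_lub; lra. }
    specialize (HMx c Hc0). rewrite (Rmax_right 0 c) in HMx by lra.
    rewrite Rabs_mult. apply Rmult_le_compat_r; [apply Rabs_pos| exact HMx].
Qed.

Lemma psi_of_lipschitz P : 0 <= P -> exists L, 0 < L /\ lipschitz_upto (psi_of phi) P L.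
Proof.
  intros HP. destruct (phi_lipschitz P HP) as [M [HM Hphi]].
  exists (phi 0 + P * M + 1). split; [pose proof (phi_nonneg 0 (Rle_refl 0)); nra|].
  intros x y Hx Hy. rewrite !psi_of_nonneg by lra.
  replace (x * phi x - y * phi y) with ((x - y) * phi x + y * (phi x - phi y)) by ring.
  eapply Rle_trans; [apply Rabs_triang|].
  rewrite !Rabs_mult, (Rabs_right (phi x)), (Rabs_right y) by (try apply Rle_ge, phi_nonneg; lra).
  pose proof (phi_max x ltac:(lra)). pose proof (phi_nonneg x ltac:(lra)).
  pose proof (Rabs_pos (x - y)). specialize (Hphi x y Hx Hy).
  assert (Rabs (x - y) * phi x <= Rabs (x - y) * phi 0) by (apply Rmult_le_compat_l; lra).
  assert (y * Rabs (phi x - phi y) <= P * (M * Rabs (x - y)))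
    by (apply Rmult_le_compat; try lra; apply Rabs_pos).
  nra.
Qed.

Lemma psi_of_le_linear p : 0 <= p -> psi_of phi p <= phi 0 * p.
Proof. intros Hp. rewrite psi_of_nonneg by exact Hp. pose proof (phi_max p Hp). nra. Qed.

Lemma psi_of_ge_linear_near_0 c : c < phi 0 ->
  exists d, 0 < d /\ forall p, 0 <= p <= d -> c * p <= psi_of phi p.
Proof.
  intros Hc. destruct (phi_right_continuous (phi 0 - c) ltac:(lra)) as [d [Hd Hf]].
  exists (d / 2). split; [lra|]. intros p Hp. rewrite psi_of_nonneg by lra.
  destruct (Req_dec p 0) as [->|Hp0]; [lra|].
  specialize (Hf p ltac:(lra)). apply Rabs_def2 in Hf. nra.
Qed.

End PhiToPsi.

Theorem proposition3p3 (phi : R -> R) (A_inf : R) :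
  C1_nonneg phi ->
  (forall r, 0 <= r -> 0 <= phi r) ->
  0 < phi 0 ->
  (forall r, 0 <= r -> phi r <= phi 0) ->
  0 < A_inf ->
  (forall r, 0 <= r -> Rabs (r * phi r) <= A_inf) ->
  (exists r0, 0 <= r0 /\ Rabs (r0 * phi r0) = A_inf) ->
  forall b : R, 4 / phi 0 < b ->
  exists (v v' v'' : R -> R),
    (forall r, 0 < r -> is_derive v r (v' r)) /\
    (forall r, 0 < r -> is_derive v' r (v'' r)) /\
    (forall r, 0 < r -> 0 <= v r) /\
    (forall r, 0 < r ->
       r * v'' r = v' r * (1 - v r * phi (v r / r))) /\
    v 0 = 0 /\
    is_right_derive v 0 0 /\
    is_lim v p_infty b.
Proof.
  intros HC1 Hpos Hphi0 Hmax HA HAb _ b Hb.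
  pose proof (psi_of_continuity phi HC1) as Hc.
  pose proof (psi_of_bounds phi A_inf Hpos HAb) as Hbd.
  pose proof (psi_of_lipschitz phi HC1 Hpos Hmax) as Hlip.
  destruct (shooting (psi_of phi) A_inf Hc Hbd Hlip (phi 0) b HA Hphi0 Hb
              (psi_of_le_linear phi Hmax) (psi_of_ge_linear_near_0 phi HC1))
    as [a [Ha [Hle Hsup]]].
  exists (sol (psi_of phi) a), (dsol (psi_of phi) a), (d2sol (psi_of phi) a).
  split; [|split; [|split; [|split; [|split; [|split]]]]].
  - intros r Hr. exact (sol_derive _ _ Hc Hbd Hlip a r Ha Hr).
  - intros r Hr. exact (dsol_derive _ _ Hc Hbd Hlip a r Ha Hr).
  - intros r Hr. apply (sol_bounds _ _ Hc Hbd Hlip a r Ha); lra.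
  - intros r Hr. pose proof (sol_bounds _ _ Hc Hbd Hlip a r Ha ltac:(lra)).
    unfold d2sol, dsol. rewrite psi_of_nonneg by (apply Rdiv_le_0_compat; lra).
    field. lra.
  - exact (sol_0 _ _ Hc Hbd Hlip a Ha).
  - apply (is_right_derive_0_of_quadratic_bound _ (a / 2)); [lra | apply (sol_0 _ _ Hc Hbd Hlip a Ha)|].
    intros y Hy. destruct (sol_bounds _ _ Hc Hbd Hlip a y Ha ltac:(lra)).
    rewrite Rabs_right by lra. lra.
  - apply is_lim_of_nondecreasing_sup; [| exact Hle | exact Hsup].
    intros x y Hxy. exact (sol_nondecreasing _ _ Hc Hbd Hlip a x y Ha Hxy).
Qed.
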